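(* Let $a,b,c$ be positive numbers with $a<b<c$. Define $\mathcal Z_{a,b}=\{0\}$ if $a/b\notin\mathbb Q$, and $\mathcal Z_{a,b}=\{0,b/q,2b/q,\dots,(p-1)b/q\}$ if $a/b=p/q$ with $p,q$ coprime positive integers. Then $\mathcal D_{a,b,c}=\emptyset$ if and only if $\mathcal D_{a,b,c}\cap(\mathcal Z_{a,b}\cup(c-\mathcal Z_{a,b}))=\emptyset$.
   Context: For $a,b,c>0$ and $t\in\mathbb R$, $\mathbf M_{a,b,c}(t)=(\chi_{[0,c)}(t-\mu+\lambda))_{\mu\in a\mathbb Z,\lambda\in b\mathbb Z}$ is the infinite matrix with rows indexed by $a\mathbb Z$ and columns by $b\mathbb Z$, acting by $(\mathbf M_{a,b,c}(t)\mathbf x)(\mu)=\sum_{\lambda\in b\mathbb Z}\chi_{[0,c)}(t-\mu+\lambda)\mathbf x(\lambda)$. $\mathcal B_b$ is the set of vectors $(\mathbf x(\lambda))_{\lambda\in b\mathbb Z}$ with entries in $\{0,1\}$, and $\mathcal B_b^0=\{\mathbf x\in\mathcal B_b:\mathbf x(0)=1\}$. $\mathbf 2$ denotes the vector indexed by $a\mathbb Z$ all of whose entries are $2$. $\mathcal D_{a,b,c}=\{t\in\mathbb R:\mathbf M_{a,b,c}(t)\mathbf x=\mathbf 2\text{ for some }\mathbf x\in\mathcal B_b^0\}$. *)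

From Stdlib Require Import Reals ZArith Znumtheory List.
Open Scope R_scope.

Definition chi0c (c t : R) : R :=
  if Rle_dec 0 t then (if Rlt_dec t c then 1 else 0) else 0.

(* 0/1 vectors indexed by b Z (index n represents lambda = b n) *)
Definition binvec (x : Z -> R) : Prop := forall n, x n = 0 \/ x n = 1.
Definition binvec0 (x : Z -> R) : Prop := binvec x /\ x 0%Z = 1.

Definition symsum (f : Z -> R) (N : nat) : R :=
  fold_right Rplus 0
    (map (fun k => f (Z.of_nat k - Z.of_nat N)%Z) (seq 0 (2 * N + 1))).

(* (M_{a,b,c}(t) x)(mu) for mu = a m : the series
   sum_{n in Z} chi_[0,c)(t - a m + b n) x(b n), whose terms vanish outside
   a finite range; we say it equals v when the symmetric partial sums are
   eventually equal to v. *)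
Definition Mrow_eq (a b c t : R) (x : Z -> R) (m : Z) (v : R) : Prop :=
  exists N0 : nat, forall N : nat, (N0 <= N)%nat ->
    symsum (fun n => chi0c c (t - a * IZR m + b * IZR n) * x n) N = v.

Definition M_eq_2 (a b c t : R) (x : Z -> R) : Prop :=
  forall m : Z, Mrow_eq a b c t x m 2.

Definition D_set (a b c : R) (t : R) : Prop :=
  exists x, binvec0 x /\ M_eq_2 a b c t x.

Definition rationalR (r : R) : Prop :=
  exists p q : Z, (q > 0)%Z /\ r = IZR p / IZR q.

Definition Zab (a b : R) (z : R) : Prop :=
  (~ rationalR (a / b) /\ z = 0) \/
  (exists p q : Z, (p > 0)%Z /\ (q > 0)%Z /\ Z.gcd p q = 1%Z /\
     a / b = IZR p / IZR q /\
     exists k : Z, (0 <= k < p)%Z /\ z = IZR k * b / IZR q).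

From Stdlib Require Import Reals ZArith List Lra Lia.
From Stdlib Require Import Classical ClassicalEpsilon FunctionalExtensionality.
Open Scope R_scope.

(* For the converse
   we show that a nonempty D_{a,b,c} always contains 0 or c; since 0 lies in
   Z_{a,b}, the point 0 (resp. c = c - 0) meets Z_{a,b} (resp. c - Z_{a,b}).

   1. Finite sums: the row series of M(t)x are finitely supported, so their
      symmetric partial sums stabilise and are invariant under reindexing.
   2. Symmetries: translating t by a Z (reindexing rows) or by b Z together
      with a shift of x (reindexing columns) preserves M(t)x = 2.
   3. Sliding: decreasing t leaves M(t)x unchanged until an entry
      chi(t - a m + b n) with x(n) = 1 jumps; moving to the first jump and
      recentring produces points of D in [0, eps) or [c, c + eps), for every
      eps > 0.
   4. Compactness: D is closed from the right.  A 0/1 vector is assembled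
      window by window (Koenig's lemma on {0,1}^Z), using that chi is right
      continuous and each row only sees finitely many entries of x.
   Combining 3 and 4 gives 0 in D or c in D. *)

Fixpoint sumZ (f : Z -> R) (lo : Z) (len : nat) : R :=
  match len with O => 0 | S l => f lo + sumZ f (lo + 1)%Z l end.

Lemma fold_sumZ f N len s :
  fold_right Rplus 0 (map (fun k => f (Z.of_nat k - Z.of_nat N)%Z) (seq s len))
  = sumZ f (Z.of_nat s - Z.of_nat N)%Z len.
Proof.
  revert s; induction len as [|len IH]; intros s; simpl; [reflexivity|].
  rewrite IH. f_equal. f_equal. lia.
Qed.

Lemma symsum_sumZ f N : symsum f N = sumZ f (- Z.of_nat N)%Z (2 * N + 1).
Proof. unfold symsum. rewrite fold_sumZ. reflexivity. Qed.

Lemma sumZ_split f lo n1 n2 :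
  sumZ f lo (n1 + n2) = sumZ f lo n1 + sumZ f (lo + Z.of_nat n1)%Z n2.
Proof.
  revert lo; induction n1 as [|n1 IH]; intros lo; simpl.
  - rewrite Z.add_0_r. ring.
  - rewrite IH. replace (lo + 1 + Z.of_nat n1)%Z with (lo + Z.pos (Pos.of_succ_nat n1))%Z
      by lia. ring.
Qed.

Lemma sumZ_zero f lo len :
  (forall k, (lo <= k < lo + Z.of_nat len)%Z -> f k = 0) -> sumZ f lo len = 0.
Proof.
  revert lo; induction len as [|len IH]; intros lo H; simpl; [reflexivity|].
  rewrite H by lia. rewrite IH; [ring|]. intros k Hk. apply H. lia.
Qed.

Lemma sumZ_shift f w lo len :
  sumZ (fun k => f (k + w)%Z) lo len = sumZ f (lo + w)%Z len.
Proof.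
  revert lo; induction len as [|len IH]; intros lo; simpl; [reflexivity|].
  rewrite IH. f_equal. f_equal. lia.
Qed.

Lemma sumZ_window f lo len A l0 :
  (lo <= A)%Z -> (A + Z.of_nat l0 <= lo + Z.of_nat len)%Z ->
  (forall k, (k < A \/ A + Z.of_nat l0 <= k)%Z -> f k = 0) ->
  sumZ f lo len = sumZ f A l0.
Proof.
  intros Hlo Hhi Hout.
  set (n1 := Z.to_nat (A - lo)).
  assert (Hn1 : (lo + Z.of_nat n1 = A)%Z) by (unfold n1; lia).
  assert (Hlen : len = (n1 + (l0 + (len - n1 - l0)))%nat) by (unfold n1 in *; lia).
  rewrite Hlen, sumZ_split, sumZ_split, Hn1.
  rewrite (sumZ_zero f lo n1), (sumZ_zero f (A + Z.of_nat l0)%Z); try ring;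
    intros k Hk; apply Hout; lia.
Qed.

Definition supported (g : Z -> R) (K : nat) : Prop :=
  forall n, (Z.of_nat K < Z.abs n)%Z -> g n = 0.

Lemma symsum_supported g K N : supported g K -> (K <= N)%nat -> symsum g N = symsum g K.
Proof.
  intros Hs HN. rewrite !symsum_sumZ. apply sumZ_window; try lia.
  intros k Hk. apply Hs. lia.
Qed.

Lemma symsum_shift g K w N : supported g K -> (K + Z.abs_nat w <= N)%nat ->
  symsum (fun k => g (k + w)%Z) N = symsum g K.
Proof.
  intros Hs HN. rewrite !symsum_sumZ, sumZ_shift. apply sumZ_window; try lia.
  intros k Hk. apply Hs. lia.
Qed.

Lemma Mrow_eq_ext a b c t t' x x' m m' v :
  (forall n, chi0c c (t - a * IZR m + b * IZR n) * x n
             = chi0c c (t' - a * IZR m' + b * IZR n) * x' n) ->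
  Mrow_eq a b c t x m v -> Mrow_eq a b c t' x' m' v.
Proof.
  intros Heq [N0 HN]. exists N0. intros N HN0. rewrite <- (HN N HN0).
  f_equal. apply functional_extensionality. intros n. symmetry. apply Heq.
Qed.

Lemma chi_row_support b c u0 : 0 < b -> exists K : nat,
  forall u n, u0 <= u <= u0 + 1 -> (Z.of_nat K < Z.abs n)%Z ->
    chi0c c (u + b * IZR n) = 0.
Proof.
  intros hb.
  set (z := up ((Rabs u0 + 1 + Rabs c) / b)).
  assert (Hz : (Rabs u0 + 1 + Rabs c) / b < IZR z) by apply archimed.
  assert (Hbz : Rabs u0 + 1 + Rabs c < b * IZR z).
  { apply (Rmult_lt_compat_l b) in Hz; [|exact hb].
    replace (b * ((Rabs u0 + 1 + Rabs c) / b)) with (Rabs u0 + 1 + Rabs c) in Hz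
      by (field; lra). exact Hz. }
  assert (Hz0 : (0 <= z)%Z).
  { apply le_IZR. pose proof (Rabs_pos u0). pose proof (Rabs_pos c). nra. }
  exists (Z.to_nat z). intros u n Hu Hn. rewrite Z2Nat.id in Hn by exact Hz0.
  pose proof (Rle_abs u0). pose proof (Rle_abs (- u0)). pose proof (Rle_abs c).
  pose proof (Rle_abs (- c)). rewrite !Rabs_Ropp in *.
  unfold chi0c. destruct (Rle_dec 0 (u + b * IZR n)); [|reflexivity].
  destruct (Rlt_dec (u + b * IZR n) c); [|reflexivity].
  exfalso. destruct (Z_lt_le_dec n 0) as [Hneg|Hpos].
  - assert (IZR n + 1 <= - IZR z) by (rewrite <- opp_IZR, <- plus_IZR; apply IZR_le; lia).
    nra.
  - assert (IZR z + 1 <= IZR n) by (rewrite <- plus_IZR; apply IZR_le; lia).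
    nra.
Qed.

Lemma chi_right_const c u : exists eta, 0 < eta /\
  forall h, 0 <= h < eta -> chi0c c (u + h) = chi0c c u.
Proof.
  unfold chi0c. destruct (Rle_dec 0 u); [destruct (Rlt_dec u c)|].
  - exists (c - u). split; [lra|]. intros h Hh.
    destruct (Rle_dec 0 (u + h)); [|lra]. destruct (Rlt_dec (u + h) c); lra.
  - exists 1. split; [lra|]. intros h Hh.
    destruct (Rle_dec 0 (u + h)); [|lra]. destruct (Rlt_dec (u + h) c); lra.
  - exists (- u). split; [lra|]. intros h Hh. destruct (Rle_dec 0 (u + h)); lra.
Qed.

Lemma common_right_const (F : Z -> R -> R) (K : nat) :
  (forall n, exists eta, 0 < eta /\ forall h, 0 <= h < eta -> F n h = F n 0) ->
  exists eta, 0 < eta /\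
    forall n h, (Z.abs n <= Z.of_nat K)%Z -> 0 <= h < eta -> F n h = F n 0.
Proof.
  intros HF. induction K as [|K [e [He IH]]].
  - destruct (HF 0%Z) as [e [He H]]. exists e. split; [exact He|].
    intros n h Hn Hh. replace n with 0%Z by lia. apply H, Hh.
  - destruct (HF (Z.of_nat (S K))) as [e1 [He1 H1]].
    destruct (HF (- Z.of_nat (S K))%Z) as [e2 [He2 H2]].
    exists (Rmin e (Rmin e1 e2)). split; [repeat apply Rmin_glb_lt; assumption|].
    pose proof (Rmin_l e (Rmin e1 e2)). pose proof (Rmin_r e (Rmin e1 e2)).
    pose proof (Rmin_l e1 e2). pose proof (Rmin_r e1 e2).
    intros n h Hn Hh.
    destruct (Z_le_gt_dec (Z.abs n) (Z.of_nat K)); [apply IH; [assumption|lra]|].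
    destruct (Z_lt_le_dec n 0).
    + replace n with (- Z.of_nat (S K))%Z by lia. apply H2. lra.
    + replace n with (Z.of_nat (S K)) by lia. apply H1. lra.
Qed.

(* Translating t by a k reindexes the rows. *)
Lemma M_eq_2_shift_a a b c t x k : M_eq_2 a b c t x -> M_eq_2 a b c (t - a * IZR k) x.
Proof.
  intros H m. apply (Mrow_eq_ext a b c t _ x x (m + k)%Z m); [|apply H].
  intros n. rewrite plus_IZR. f_equal. f_equal. ring.
Qed.

(* Translating t by b w reindexes the columns, i.e. shifts x by w. *)
Lemma M_eq_2_shift_b a b c t x w : 0 < b ->
  M_eq_2 a b c t x -> M_eq_2 a b c (t + b * IZR w) (fun n => x (n + w)%Z).
Proof.
  intros hb H m. destruct (H m) as [N0 HN].
  destruct (chi_row_support b c (t - a * IZR m) hb) as [K HK].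
  set (g := fun n => chi0c c (t - a * IZR m + b * IZR n) * x n).
  assert (Hs : supported g K).
  { intros n Hn. unfold g. rewrite (HK (t - a * IZR m)); [ring|lra|exact Hn]. }
  exists (Nat.max N0 K + Z.abs_nat w)%nat. intros N HN1.
  replace (fun n => chi0c c (t + b * IZR w - a * IZR m + b * IZR n) * x (n + w)%Z)
    with (fun n => g (n + w)%Z).
  2:{ apply functional_extensionality; intro n. unfold g. rewrite plus_IZR.
      f_equal. f_equal. ring. }
  rewrite (symsum_shift g K w N Hs) by lia.
  rewrite <- (symsum_supported g K (Nat.max N0 K) Hs) by lia.
  apply HN. lia.
Qed.

Lemma D_set_recentre a b c t x m n : 0 < b -> binvec x -> M_eq_2 a b c t x ->
  x n = 1 -> D_set a b c (t - a * IZR m + b * IZR n).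
Proof.
  intros hb Hx HM Hn. exists (fun k => x (k + n)%Z). split; [split|].
  - intros k. apply Hx.
  - exact Hn.
  - replace (t - a * IZR m + b * IZR n) with (t + b * IZR n - a * IZR m) by ring.
    apply M_eq_2_shift_a, M_eq_2_shift_b; assumption.
Qed.

Lemma inf_approx (E : R -> Prop) e0 : E e0 -> 0 <= e0 ->
  exists D, 0 <= D /\ (forall u, E u -> ~ (0 <= u < D)) /\
    forall eps, 0 < eps -> exists u, E u /\ D <= u < D + eps.
Proof.
  intros He0 He0pos.
  set (P := fun d => 0 <= d /\ forall u, E u -> ~ (0 <= u < d)).
  assert (HP0 : P 0) by (split; [lra|intros u _ Hu; lra]).
  destruct (completeness P) as [D [Hub Hleast]].
  - exists e0. intros d [Hd Hfree]. destruct (Rle_lt_dec d e0) as [Hle|Hlt]; [exact Hle|].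
    exfalso. apply (Hfree e0 He0). lra.
  - exists 0. exact HP0.
  - assert (Hfree : forall u, E u -> ~ (0 <= u < D)).
    { intros u Hu [Hu0 HuD].
      assert (Habove : exists d, P d /\ u < d).
      { apply NNPP. intros Hno. assert (D <= u); [|lra]. apply Hleast.
        intros d Hd. destruct (Rle_lt_dec d u) as [Hle|Hlt]; [exact Hle|].
        exfalso. apply Hno. exists d. split; assumption. }
      destruct Habove as [d [[_ Hd] Hud]]. apply (Hd u Hu). lra. }
    exists D. split; [apply Hub, HP0|]. split; [exact Hfree|].
    intros eps Heps. apply NNPP. intros Hno.
    assert (HPe : P (D + eps)).
    { split; [pose proof (Hub 0 HP0); lra|]. intros u Hu Hrange.
      destruct (Rlt_le_dec u D).
      - apply (Hfree u Hu). lra.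
      - apply Hno. exists u. split; [exact Hu|lra]. }
    pose proof (Hub _ HPe). lra.
Qed.

(* The critical values of (t, x): decreasing t by d changes some entry
   chi(t - a m + b n) with x(n) = 1 exactly when such a value lies in [0, d). *)
Definition critical a b c t (x : Z -> R) (u : R) : Prop :=
  exists m n, x n = 1 /\
    (u = t - a * IZR m + b * IZR n \/ u = t - a * IZR m + b * IZR n - c).

Lemma M_eq_2_slide a b c t x d : binvec x -> 0 <= d ->
  (forall u, critical a b c t x u -> ~ (0 <= u < d)) ->
  M_eq_2 a b c t x -> M_eq_2 a b c (t - d) x.
Proof.
  intros Hx Hd Hfree HM m. apply (Mrow_eq_ext a b c t _ x x m m); [|apply HM].
  intros n. destruct (Hx n) as [Hn|Hn]; rewrite Hn; [ring|].
  assert (C1 := Hfree (t - a * IZR m + b * IZR n) ltac:(exists m, n; auto)).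
  assert (C2 := Hfree (t - a * IZR m + b * IZR n - c) ltac:(exists m, n; auto)).
  unfold chi0c.
  destruct (Rle_dec 0 (t - a * IZR m + b * IZR n));
  destruct (Rle_dec 0 (t - d - a * IZR m + b * IZR n));
  destruct (Rlt_dec (t - a * IZR m + b * IZR n) c);
  destruct (Rlt_dec (t - d - a * IZR m + b * IZR n) c);
  try reflexivity; exfalso; lra.
Qed.

Lemma critical_exists a b c t x : 0 < a -> x 0%Z = 1 ->
  exists u, critical a b c t x u /\ 0 <= u.
Proof.
  intros ha Hx0. set (m0 := Int_part (t / a)).
  assert (Hm0 : a * IZR m0 <= t).
  { destruct (base_Int_part (t / a)) as [H _]. fold m0 in H.
    apply (Rmult_le_compat_l a) in H; [|lra].
    replace (a * (t / a)) with t in H by (field; lra). exact H. }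
  exists (t - a * IZR m0 + b * IZR 0). split.
  - exists m0, 0%Z. auto.
  - rewrite Rmult_0_r. lra.
Qed.

Lemma D_set_slide a b c t : 0 < a -> 0 < b -> D_set a b c t ->
  forall eps, 0 < eps ->
    exists t2, D_set a b c t2 /\ (0 <= t2 < eps \/ c <= t2 < c + eps).
Proof.
  intros ha hb [x [[Hx Hx0] HM]] eps Heps.
  destruct (critical_exists a b c t x ha Hx0) as [u0 [Hu0 Hu0pos]].
  destruct (inf_approx _ u0 Hu0 Hu0pos) as [D [HD [Hfree Happ]]].
  pose proof (M_eq_2_slide a b c t x D Hx HD Hfree HM) as HMD.
  destruct (Happ eps Heps) as [u [[m [n [Hn Hu]]] Hrange]].
  exists (t - D - a * IZR m + b * IZR n). split.
  - exact (D_set_recentre a b c (t - D) x m n hb Hx HMD Hn).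
  - destruct Hu as [Hu|Hu]; [left|right]; lra.
Qed.

Lemma eventually_one_of (P Q : R -> Prop) :
  (forall e1 e2, 0 < e1 <= e2 -> P e1 -> P e2) ->
  (forall e1 e2, 0 < e1 <= e2 -> Q e1 -> Q e2) ->
  (forall e, 0 < e -> P e \/ Q e) ->
  (forall e, 0 < e -> P e) \/ (forall e, 0 < e -> Q e).
Proof.
  intros HP HQ H.
  destruct (classic (forall e, 0 < e -> P e)) as [Hall|Hnot]; [left; exact Hall|right].
  apply not_all_ex_not in Hnot. destruct Hnot as [e0 Hnot].
  apply imply_to_and in Hnot. destruct Hnot as [He0 HnP].
  intros e He. pose proof (Rmin_l e e0). pose proof (Rmin_r e e0).
  assert (Hm : 0 < Rmin e e0) by (apply Rmin_glb_lt; assumption).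
  destruct (H (Rmin e e0) Hm) as [HPm|HQm].
  - exfalso. apply HnP. apply (HP (Rmin e e0)); [lra|exact HPm].
  - apply (HQ (Rmin e e0)); [lra|exact HQm].
Qed.

Section BinaryCompactness.

Variable Approx : R -> (Z -> R) -> Prop.
Hypothesis Approx_mono : forall e1 e2 x, 0 < e1 <= e2 -> Approx e1 x -> Approx e2 x.
Hypothesis Approx_nonempty : forall e, 0 < e -> exists x, Approx e x.
Hypothesis Approx_binary : forall e x, Approx e x -> binvec x.

Definition realizable (W : Z -> Prop) (y : Z -> R) : Prop :=
  forall e, 0 < e -> exists x, Approx e x /\ forall n, W n -> x n = y n.

Definition window (K : nat) (n : Z) : Prop := (Z.abs n < Z.of_nat K)%Z.

Lemma realizable_agree W y y' :
  realizable W y -> (forall n, W n -> y' n = y n) -> realizable W y'.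
Proof.
  intros Hy Hagree e He. destruct (Hy e He) as [x [Hx Hxy]].
  exists x. split; [exact Hx|]. intros n Hn. rewrite Hagree by exact Hn. apply Hxy, Hn.
Qed.

Lemma realizable_extend W y k : realizable W y ->
  exists y', realizable (fun n => W n \/ n = k) y' /\ forall n, n <> k -> y' n = y n.
Proof.
  intros Hy.
  set (witness := fun v e => exists x, Approx e x /\ (forall n, W n -> x n = y n) /\ x k = v).
  assert (Hmono : forall v e1 e2, 0 < e1 <= e2 -> witness v e1 -> witness v e2).
  { intros v e1 e2 He [x [Hx Hrest]]. exists x. split; [exact (Approx_mono e1 e2 x He Hx)|exact Hrest]. }
  assert (Hv : exists v, forall e, 0 < e -> witness v e).
  { destruct (eventually_one_of (witness 0) (witness 1) (Hmono 0) (Hmono 1)) as [H|H];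
      [| exists 0; exact H | exists 1; exact H].
    intros e He. destruct (Hy e He) as [x [Hx Hxy]].
    destruct (Approx_binary e x Hx k) as [Hk|Hk]; [left|right]; exists x; auto. }
  destruct Hv as [v Hv].
  exists (fun n => if Z.eq_dec n k then v else y n). split.
  - intros e He. destruct (Hv e He) as [x [Hx [Hxy Hk]]]. exists x. split; [exact Hx|].
    intros n Hn. destruct (Z.eq_dec n k) as [->|Hne]; [exact Hk|].
    destruct Hn as [Hn|Hn]; [apply Hxy, Hn|contradiction].
  - intros n Hne. destruct (Z.eq_dec n k); [contradiction|reflexivity].
Qed.

Lemma realizable_window_step K y : realizable (window K) y ->
  exists y', realizable (window (S K)) y' /\ forall n, window K n -> y' n = y n.
Proof.
  intros Hy.
  destruct (realizable_extend _ _ (Z.of_nat K) Hy) as [y1 [Hy1 Hy1y]].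
  destruct (realizable_extend _ _ (- Z.of_nat K)%Z Hy1) as [y2 [Hy2 Hy2y]].
  exists y2. split.
  - intros e He. destruct (Hy2 e He) as [x [Hx Hxy]]. exists x. split; [exact Hx|].
    intros n Hn. apply Hxy. unfold window in *. lia.
  - intros n Hn. unfold window in Hn. rewrite Hy2y, Hy1y by lia. reflexivity.
Qed.

Lemma coherent_patterns : exists Y : nat -> Z -> R,
  (forall K, realizable (window K) (Y K)) /\
  (forall K n, window K n -> Y (S K) n = Y K n).
Proof.
  set (Next := fun K (y : Z -> R) y' =>
         realizable (window (S K)) y' /\ forall n, window K n -> y' n = y n).
  set (next := fun K y => epsilon (inhabits y) (Next K y)).
  set (Y := fix Y K := match K with O => fun _ => 0 | S K' => next K' (Y K') end).
  assert (HY : forall K, realizable (window K) (Y K)).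
  { induction K as [|K IH].
    - intros e He. destruct (Approx_nonempty e He) as [x Hx].
      exists x. split; [exact Hx|]. unfold window. intros n Hn. lia.
    - apply (epsilon_spec (inhabits (Y K)) (Next K (Y K))), realizable_window_step, IH. }
  exists Y. split; [exact HY|]. intros K n Hn.
  apply (epsilon_spec (inhabits (Y K)) (Next K (Y K))); [|exact Hn].
  apply realizable_window_step, HY.
Qed.

Lemma binary_compactness : exists y, binvec y /\ forall K, realizable (window K) y.
Proof.
  destruct coherent_patterns as [Y [HY HYs]].
  assert (Hstable : forall d K n, window K n -> Y (d + K)%nat n = Y K n).
  { induction d as [|d IH]; intros K n Hn; [reflexivity|].
    simpl. rewrite HYs by (unfold window in *; lia). apply IH, Hn. }
  set (y := fun n => Y (S (Z.abs_nat n)) n).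
  assert (Hlim : forall K n, window K n -> y n = Y K n).
  { intros K n Hn. unfold y, window in *.
    replace K with ((K - S (Z.abs_nat n)) + S (Z.abs_nat n))%nat by lia.
    symmetry. apply Hstable. unfold window. lia. }
  exists y. split.
  - intros n. destruct (HY (S (Z.abs_nat n)) 1 Rlt_0_1) as [x [Hx Hxy]].
    unfold y. rewrite <- Hxy by (unfold window; lia). exact (Approx_binary 1 x Hx n).
  - intros K. apply (realizable_agree _ (Y K)); [apply HY|apply Hlim].
Qed.

End BinaryCompactness.

Lemma D_set_right_closed a b c t0 : 0 < b ->
  (forall e, 0 < e -> exists t, t0 <= t < t0 + e /\ D_set a b c t) -> D_set a b c t0.
Proof.
  intros hb Happ.
  set (approx := fun e x => binvec0 x /\ exists t, t0 <= t < t0 + e /\ M_eq_2 a b c t x).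
  destruct (binary_compactness approx) as [y [Hy Hreal]].
  - intros e1 e2 x He [Hx [t [Ht HM]]]. split; [exact Hx|]. exists t. split; [lra|exact HM].
  - intros e He. destruct (Happ e He) as [t [Ht [x [Hx HM]]]].
    exists x. split; [exact Hx|]. exists t. split; assumption.
  - intros e x [[Hx _] _]. exact Hx.
  - exists y. split; [split; [exact Hy|]|].
    { destruct (Hreal 1%nat 1 Rlt_0_1) as [x [[[_ Hx0] _] Hxy]].
      rewrite <- Hxy; [exact Hx0|unfold window; simpl; lia]. }
    intros m.
    destruct (chi_row_support b c (t0 - a * IZR m) hb) as [K HK].
    destruct (common_right_const
                (fun n h => chi0c c (t0 - a * IZR m + h + b * IZR n)) K) as [eta [Heta Hconst]].
    { intros n. destruct (chi_right_const c (t0 - a * IZR m + b * IZR n)) as [eta [Heta H]].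
      exists eta. split; [exact Heta|]. intros h Hh. rewrite Rplus_0_r.
      rewrite <- (H h Hh). f_equal. ring. }
    pose proof (Rmin_l eta 1). pose proof (Rmin_r eta 1).
    destruct (Hreal (S K) (Rmin eta 1) ltac:(apply Rmin_glb_lt; lra))
      as [x [[_ [t [Ht HM]]] Hxy]].
    apply (Mrow_eq_ext a b c t t0 x y m m); [|apply HM].
    intros n. destruct (Z_le_gt_dec (Z.abs n) (Z.of_nat K)) as [Hin|Hout].
    + rewrite Hxy by (unfold window; lia).
      replace (t - a * IZR m + b * IZR n) with (t0 - a * IZR m + (t - t0) + b * IZR n) by ring.
      rewrite Hconst by (assumption || lra). rewrite Rplus_0_r. reflexivity.
    + rewrite (HK (t - a * IZR m)), (HK (t0 - a * IZR m)); [ring|lra|lia|lra|lia].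
Qed.

Lemma lowest_terms p q : (q > 0)%Z ->
  exists p' q', (q' > 0)%Z /\ Z.gcd p' q' = 1%Z /\ IZR p / IZR q = IZR p' / IZR q'.
Proof.
  intros Hq. set (g := Z.gcd p q).
  assert (Hg : (0 < g)%Z).
  { pose proof (Z.gcd_nonneg p q). destruct (Z.eq_dec g 0) as [E|]; [|lia].
    apply Z.gcd_eq_0 in E. lia. }
  destruct (Z.gcd_divide_l p q) as [p' Hp']. destruct (Z.gcd_divide_r p q) as [q' Hq'].
  fold g in Hp', Hq'.
  exists p', q'. split; [nia|]. split.
  - assert (Hgg : g = (g * Z.gcd p' q')%Z).
    { unfold g at 1. rewrite Hp', Hq', (Z.mul_comm p' g), (Z.mul_comm q' g).
      rewrite Z.gcd_mul_mono_l. lia. }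
    nia.
  - assert (0 < IZR g) by (apply IZR_lt; exact Hg).
    assert (0 < IZR q') by (apply IZR_lt; nia).
    rewrite Hp', Hq', !mult_IZR. field. lra.
Qed.

Lemma Zab_0 a b : 0 < a -> 0 < b -> Zab a b 0.
Proof.
  intros ha hb.
  destruct (classic (rationalR (a / b))) as [[p [q [Hq Hpq]]]|Hirr]; [right|left; auto].
  destruct (lowest_terms p q Hq) as [p' [q' [Hq' [Hg Heq]]]].
  assert (Hp' : (p' > 0)%Z).
  { assert (Hab : 0 < IZR p' / IZR q') by (rewrite <- Heq, <- Hpq; apply Rdiv_lt_0_compat; lra).
    assert (Hq'R : 0 < IZR q') by (apply IZR_lt; lia).
    assert (0 < IZR p').
    { replace (IZR p') with (IZR p' / IZR q' * IZR q') by (field; lra). nra. }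
    apply lt_IZR in H. lia. }
  exists p', q'. split; [exact Hp'|]. split; [exact Hq'|]. split; [exact Hg|].
  split; [congruence|]. exists 0%Z. split; [lia|]. unfold Rdiv. ring.
Qed.

Lemma D_set_contains_0_or_c a b c t : 0 < a -> 0 < b ->
  D_set a b c t -> D_set a b c 0 \/ D_set a b c c.
Proof.
  intros ha hb Ht.
  set (near := fun t0 e => exists t2, t0 <= t2 < t0 + e /\ D_set a b c t2).
  assert (Hmono : forall t0 e1 e2, 0 < e1 <= e2 -> near t0 e1 -> near t0 e2).
  { intros t0 e1 e2 He [t2 [Hr HD]]. exists t2. split; [lra|exact HD]. }
  destruct (eventually_one_of (near 0) (near c) (Hmono 0) (Hmono c)) as [H0|Hc].
  - intros e He. destruct (D_set_slide a b c t ha hb Ht e He) as [t2 [HD [Hr|Hr]]];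
      [left|right]; exists t2; split; (lra || exact HD).
  - left. apply D_set_right_closed; assumption.
  - right. apply D_set_right_closed; assumption.
Qed.

Theorem theorem3p3 (a b c : R) (ha : 0 < a) (hab : a < b) (hbc : b < c) :
  (forall t : R, ~ D_set a b c t) <->
  (forall t : R, D_set a b c t -> ~ (Zab a b t \/ Zab a b (c - t))).
Proof.
  assert (hb : 0 < b) by lra.
  split.
  - intros Hempty t Ht. exfalso. exact (Hempty t Ht).
  - intros Hsep t Ht.
    destruct (D_set_contains_0_or_c a b c t ha hb Ht) as [H0|Hc].
    + apply (Hsep 0 H0). left. apply Zab_0; assumption.
    + apply (Hsep c Hc). right. rewrite Rminus_diag. apply Zab_0; assumption.
Qed.
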